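(* Let $v_0=\epsilon$ and for $i>0$ let $v_i=\bigl(v_{i-1}0v_{i-1}1v_{i-1}1v_{i-1}0v_{i-1}2v_{i-1}2\bigr)^{(+)}$ over $\{0,1,2\}$; each $v_{i-1}$ is a prefix of $v_i$, and let $\mathbf v=\lim_{i\to\infty}v_i$. Let $\varphi$ be the morphism $0\mapsto 0100$, $1\mapsto 01011$, $2\mapsto 010111$. Then $\mathbf v$ is rich and $D(\varphi(\mathbf v))=\infty$.
   Context: For a finite word $w$, $w^{(+)}$ denotes the shortest palindrome having $w$ as a prefix. The defect of a finite word $w$ is $D(w)=|w|+1-(\text{number of distinct palindromic factors of } w, \text{ including the empty word})$; the defect of an infinite word is the supremum of the defects of its prefixes. An infinite word is rich if its defect is $0$. *)

From mathcomp Require Import all_boot.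
Set Implicit Arguments. Unset Strict Implicit. Unset Printing Implicit Defensive.

(* Finite words are sequences of letters; letters are natural numbers
   (the words considered only use the letters 0, 1, 2). *)
Definition word := seq nat.
Definition iword := nat -> nat.

Definition pal (w : word) : bool := rev w == w.

(* w^(+): the shortest palindrome having w as a prefix.  Any palindrome
   with prefix w of length |w|+k (k <= |w|) is w ++ rev (take k w), and
   k = |w| always works, so we take the least such k. *)
Definition pclos (w : word) : word :=
  let k := find (fun k => pal (w ++ rev (take k w))) (iota 0 (size w).+1) in
  w ++ rev (take k w).

Definition factors (w : word) : seq word :=
  [seq take j (drop i w) | i <- iota 0 (size w).+1, j <- iota 0 (size w).+1].

(* number of distinct palindromic factors, including the empty word *)
Definition npal (w : word) : nat := size (undup [seq u <- factors w | pal u]).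

Definition defect (w : word) : nat := (size w).+1 - npal w.

Definition iprefix (x : iword) (n : nat) : word := mkseq x n.

Definition rich (x : iword) : Prop := forall n, defect (iprefix x n) = 0.

Definition infinite_defect (x : iword) : Prop :=
  forall m, exists n, m <= defect (iprefix x n).

Fixpoint vfin (i : nat) : word :=
  match i with
  | 0 => [::]
  | i'.+1 => let u := vfin i' in
      pclos (u ++ 0 :: u ++ 1 :: u ++ 1 :: u ++ 0 :: u ++ 2 :: u ++ [:: 2])
  end.

(* the limit word: letter n is read in v_{n+1} (which has length > n) *)
Definition vlim : iword := fun n => nth 0 (vfin n.+1) n.

Definition phi (a : nat) : word :=
  match a with
  | 0 => [:: 0; 1; 0; 0]
  | 1 => [:: 0; 1; 0; 1; 1]
  | _ => [:: 0; 1; 0; 1; 1; 1]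
  end.

Definition morph_word (f : nat -> word) (w : word) : word := flatten (map f w).

(* image of an infinite word under a non-erasing morphism f:
   letter m is read in f(x_0 ... x_m), which has length > m *)
Definition morph_iword (f : nat -> word) (x : iword) : iword :=
  fun m => nth 0 (morph_word f (iprefix x m.+1)) m.

From mathcomp Require Import all_boot zify.
Set Implicit Arguments. Unset Strict Implicit. Unset Printing Implicit Defensive.

(* The word v is the Toeplitz word with pattern 0110220110? whose holes ? are
   filled by v itself: v_k is its prefix of length 11^k - 1.

   Richness: every prefix v[0..n] has a palindromic suffix occurring nowhere
   earlier.  By strong induction, a new palindrome ending at the hole 11m+10 (or
   around it) is obtained by lifting the new palindrome ending at m: long factors
   are synchronised with the pattern by the factor 22, so an earlier occurrence
   would descend to the holes.  When the letter at m occurs there for the first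
   time, a short palindrome around the hole does the job.

   Infinite defect: phi(a) = 010 e_a with e_0 = 0, e_1 = 11, e_2 = 111.  For the
   prefix w = v_k 0 v_k 1 v_k 1 v_k 0 v_k 2 v_k of v, phi(w) 010 is
   p 0 p 11 p 11 p 0 p 111 p with the palindrome p = phi(v_k) 010, and p occurs in
   it only at the block boundaries.  In phi(v) it is followed by 111, and
   appending the first two of these 1s creates no new palindrome, so the defect
   grows by 2 with every k. *)

(** * Palindromic factors and the defect of finite words *)

Lemma eq_mem_size_undup (T : eqType) (s1 s2 : seq T) :
  s1 =i s2 -> size (undup s1) = size (undup s2).
Proof.
move=> eq12; apply/perm_size/uniq_perm; rewrite ?undup_uniq // => x.
by rewrite !mem_undup eq12.
Qed.

Lemma eq_mem_size_undup_cons (T : eqType) (s1 s2 : seq T) t : t \notin s2 ->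
  s1 =i t :: s2 -> size (undup s1) = (size (undup s2)).+1.
Proof.
move=> t_new eq12; have -> : size (undup s1) = size (t :: undup s2).
  apply/perm_size/uniq_perm; rewrite /= ?mem_undup ?t_new ?undup_uniq // => x.
  by rewrite mem_undup eq12 !in_cons mem_undup.
by [].
Qed.

Lemma prefix_prefix_size (T : eqType) (s1 s2 s : seq T) :
  prefix s1 s -> prefix s2 s -> size s1 <= size s2 -> prefix s1 s2.
Proof.
move=> /prefixP [r1 E1] /prefixP [r2 E2] le12; rewrite prefixE; apply/eqP.
have : take (size s1) s = s1 by rewrite E1 take_size_cat.
rewrite E2 take_cat ltn_neqAle le12 andbT.
by case: eqP => [->|//]; rewrite subnn take0 cats0 take_size.
Qed.

Lemma suffix_suffix_size (T : eqType) (s1 s2 s : seq T) :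
  suffix s1 s -> suffix s2 s -> size s1 <= size s2 -> suffix s1 s2.
Proof.
rewrite -!prefix_rev => p1 p2 le12.
by apply: prefix_prefix_size p1 p2 _; rewrite !size_rev.
Qed.

Lemma suffix_wordP (u w : word) : suffix u w -> exists s : word, w = s ++ u.
Proof. by case/suffixP => s ->; exists s. Qed.

Lemma eq_cat_prefix (T : eqType) (s1 s2 t1 t2 : seq T) :
  s1 ++ s2 = t1 ++ t2 -> size s1 <= size t1 -> t1 = s1 ++ drop (size s1) t1.
Proof.
move=> E le1; rewrite -{1}(cat_take_drop (size s1) t1); congr (_ ++ _).
have := congr1 (take (size s1)) E; rewrite take_size_cat // take_cat ltn_neqAle le1 andbT.
by case: eqP => [->|//]; rewrite subnn take0 cats0 take_size.
Qed.

Lemma prefix_nth (u v : word) i : prefix u v -> i < size u -> nth 0 u i = nth 0 v i.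
Proof. by move=> /prefixP [r ->] iu; rewrite nth_cat iu. Qed.

Lemma nseqD_sub (T : Type) (x : T) m j :
  j <= m -> nseq m x = nseq (m - j) x ++ nseq j x.
Proof. by move=> jm; rewrite -nseqD subnK. Qed.

Lemma mkseqD (T : Type) (f : nat -> T) m d :
  mkseq f (m + d) = mkseq f m ++ map f (iota m d).
Proof. by rewrite /mkseq iotaD map_cat. Qed.

Lemma eq_mkseq_nth (s : word) f n :
  size s = n -> (forall i, i < n -> nth 0 s i = f i) -> s = mkseq f n.
Proof.
move=> Hs H; apply: (@eq_from_nth _ 0); rewrite ?size_mkseq // => i Hi.
by rewrite nth_mkseq -?Hs // H // -Hs.
Qed.

Lemma find_iota_min (P : pred nat) n k :
  k < n -> P k -> (forall j, j < k -> ~~ P j) -> find P (iota 0 n) = k.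
Proof.
move=> kn Pk minP.
have hasPk : has P (iota 0 n) by apply/hasP; exists k; rewrite ?mem_iota.
have := hasPk; rewrite has_find size_iota => lt_n.
case: (ltngtP (find P (iota 0 n)) k) => // [lt_k|gt_k].
  by have := minP _ lt_k; rewrite -[X in P X](nth_iota 0 0 lt_n) nth_find.
by have := before_find 0 gt_k; rewrite nth_iota // add0n Pk.
Qed.

Lemma mem_factors (u w : word) : (u \in factors w) = infix u w.
Proof.
apply/idP/idP.
- rewrite /factors => /allpairsP [[i j] /= [_ _ ->]].
  exact: infix_trans (infix_take _ j) (infix_drop _ i).
- move=> /infixP [s [s' ->]].
  have in_iota k n : k <= n -> k \in iota 0 n.+1 by rewrite mem_iota; lia.
  apply/allpairsP; exists (size s, size u) => /=; rewrite !size_cat.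
  split; [apply: in_iota; lia | apply: in_iota; lia |].
  by rewrite drop_size_cat // take_size_cat.
Qed.

Definition pal_factors (w : word) : seq word := [seq u <- factors w | pal u].

Lemma mem_pal_factors u w : (u \in pal_factors w) = pal u && infix u w.
Proof. by rewrite mem_filter mem_factors. Qed.

Lemma palP (s : word) :
  reflect (forall i, i < size s -> nth 0 s i = nth 0 s (size s - i.+1)) (pal s).
Proof.
rewrite /pal; apply: (iffP eqP) => [E i Hi | H]; first by rewrite -[in LHS]E nth_rev.
by apply: (@eq_from_nth _ 0); rewrite ?size_rev // => i Hi; rewrite nth_rev // (H i Hi).
Qed.

Lemma pal_suffix_prefix (u v : word) : pal u -> pal v -> suffix u v -> prefix u v.
Proof. by move=> /eqP Hu /eqP Hv; rewrite -prefix_rev Hu Hv. Qed.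

(* A shorter palindromic suffix of rcons w a is a prefix, hence a factor, of the
   longer one with its last letter removed: at most one palindrome is new. *)
Lemma new_pal_suffix_unique (w : word) a u1 u2 :
  suffix u1 (rcons w a) -> pal u1 -> ~~ infix u1 w ->
  suffix u2 (rcons w a) -> pal u2 -> ~~ infix u2 w -> u1 = u2.
Proof.
wlog le12 : u1 u2 / size u1 <= size u2 => [hwlog|].
  case: (leqP (size u1) (size u2)) => [le12|/ltnW le21] S1 P1 N1 S2 P2 N2.
    exact: hwlog.
  by symmetry; apply: hwlog.
move=> S1 P1 N1 S2 P2 _.
case/prefixP: (pal_suffix_prefix P1 P2 (suffix_suffix_size S1 S2 le12)) => r E2.
case/lastP: r E2 => [|r b] E2; first by rewrite E2 cats0.
case/suffixP: S2 => s; rewrite E2 -!rcons_cat => /rcons_inj [Ew _].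
by move: N1; rewrite Ew infix_infix.
Qed.

Lemma new_pal_suffixP (w : word) a :
  (exists u, [/\ suffix u (rcons w a), pal u & ~~ infix u w]) \/
  (forall u, suffix u (rcons w a) -> pal u -> infix u w).
Proof.
case: (boolP (has (fun u => pal u && ~~ infix u w)
                  [seq drop k (rcons w a) | k <- iota 0 (size w).+2])).
  move=> /hasP [? /mapP [k _ ->] /andP [Pu Nu]]; left.
  by exists (drop k (rcons w a)); rewrite suffix_drop.
move=> /hasPn old; right => u Su Pu.
have : u \in [seq drop k (rcons w a) | k <- iota 0 (size w).+2].
  apply/mapP; exists (size (rcons w a) - size u).
    by rewrite mem_iota size_rcons; lia.
  by apply/esym/eqP; rewrite -suffixE.
by move=> /old; rewrite Pu negbK.
Qed.

Lemma npal_rcons_new (w : word) a u : suffix u (rcons w a) -> pal u -> ~~ infix u w ->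
  npal (rcons w a) = (npal w).+1.
Proof.
move=> Su Pu Nu; apply: (eq_mem_size_undup_cons (t := u)).
  by rewrite mem_pal_factors negb_and Nu orbT.
move=> x; rewrite in_cons !mem_pal_factors infix_rconsl.
case: (eqVneq x u) => [->|neq]; first by rewrite Pu Su.
case Px: (pal x) => //=; case: (boolP (infix x w)) => [|Nx]; rewrite ?orbT //= orbF.
by apply/negbTE; apply: contra_neqN neq => Sx; apply: new_pal_suffix_unique Sx Px Nx Su Pu Nu.
Qed.

Lemma npal_rcons_old (w : word) a :
  (forall u, suffix u (rcons w a) -> pal u -> infix u w) -> npal (rcons w a) = npal w.
Proof.
move=> old; apply: eq_mem_size_undup => x; rewrite !mem_pal_factors infix_rconsl.
by case Px: (pal x); case Sx: (suffix x (rcons w a)); rewrite ?orbF // (old _ Sx Px).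
Qed.

Lemma npal_le (w : word) : npal w <= (size w).+1.
Proof.
elim/last_ind: w => [//|w a IH]; rewrite size_rcons.
case: (new_pal_suffixP w a) => [[u [Su Pu Nu]]|old].
  by rewrite (npal_rcons_new Su Pu Nu).
by rewrite npal_rcons_old //; lia.
Qed.

Lemma defect_rcons_new (w : word) a u : suffix u (rcons w a) -> pal u -> ~~ infix u w ->
  defect (rcons w a) = defect w.
Proof. by move=> Su Pu Nu; rewrite /defect (npal_rcons_new Su Pu Nu) size_rcons. Qed.

Lemma defect_rcons_old (w : word) a :
  (forall u, suffix u (rcons w a) -> pal u -> infix u w) ->
  defect (rcons w a) = (defect w).+1.
Proof. by move=> old; rewrite /defect (npal_rcons_old old) size_rcons; have := npal_le w; lia. Qed.

Lemma defect_rcons (w : word) a : defect w <= defect (rcons w a).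
Proof.
case: (new_pal_suffixP w a) => [[u [Su Pu Nu]]|old].
  by rewrite (defect_rcons_new Su Pu Nu).
by rewrite defect_rcons_old.
Qed.

Lemma defect_iprefix_mono (x : iword) m n :
  m <= n -> defect (iprefix x m) <= defect (iprefix x n).
Proof.
move=> /subnKC <-; elim: (n - m) => [|d IH]; first by rewrite addn0.
by rewrite addnS /iprefix mkseqS; apply: leq_trans IH (defect_rcons _ _).
Qed.

Lemma pal_drop_of_closure (w : word) k : pal (w ++ rev (take k w)) -> pal (drop k w).
Proof.
rewrite /pal -{1 3}(cat_take_drop k w) !rev_cat revK -!catA => /eqP.
by move/eqP; rewrite eqseq_cat // => /andP [_]; rewrite eqseq_cat ?size_rev // => /andP [].
Qed.

Lemma pclosE (w : word) k : k <= size w -> pal (w ++ rev (take k w)) ->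
  (forall j, j < k -> ~~ pal (drop j w)) -> pclos w = w ++ rev (take k w).
Proof.
move=> kw Pk minj; rewrite /pclos (@find_iota_min _ _ k) //.
by move=> j jk; apply: contra (minj j jk); apply: pal_drop_of_closure.
Qed.

(** * The word v as a Toeplitz word *)

Definition vpat : word := [:: 0; 1; 1; 0; 2; 2; 0; 1; 1; 0].

(* The Toeplitz word with pattern [vpat] followed by a hole: for n = 11 q + r,
   letter n is [vpat_r] if r < 10 and letter q if r = 10.  Since q < n, fuel
   n.+1 suffices. *)
Fixpoint toep_fuel (f n : nat) : nat :=
  if f is f'.+1 then
    if n %% 11 == 10 then toep_fuel f' (n %/ 11) else nth 0 vpat (n %% 11)
  else 0.

Definition toep (n : nat) : nat := toep_fuel n.+1 n.

Lemma toep_fuel_eq f g n : n < f -> n < g -> toep_fuel f n = toep_fuel g n.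
Proof.
elim: f g n => [|f IH] [|g] n //= nf ng.
by case: ifP => // n10; apply: IH; lia.
Qed.

Lemma toep_fuelE f n : n < f -> toep_fuel f n = toep n.
Proof. by move=> nf; apply: toep_fuel_eq. Qed.

Lemma toep_rec n :
  toep n = if n %% 11 == 10 then toep (n %/ 11) else nth 0 vpat (n %% 11).
Proof. by rewrite {1}/toep /=; case: ifP => // n10; apply: toep_fuelE; lia. Qed.

Lemma toep_mod n : n %% 11 != 10 -> toep n = nth 0 vpat (n %% 11).
Proof. by move=> Hn; rewrite toep_rec (negbTE Hn). Qed.

Lemma toep_mod_hole n : n %% 11 = 10 -> toep n = toep (n %/ 11).
Proof. by move=> Hn; rewrite toep_rec Hn eqxx. Qed.

Lemma toep_hole j : toep (11 * j + 10) = toep j.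
Proof. by rewrite toep_mod_hole; [congr toep|]; lia. Qed.

Lemma toep_pat j r : r < 10 -> toep (11 * j + r) = nth 0 vpat r.
Proof. by move=> Hr; rewrite toep_mod; [congr nth|]; lia. Qed.

Lemma toep_small r : r < 10 -> toep r = nth 0 vpat r.
Proof. by move=> Hr; have := toep_pat 0 Hr; rewrite muln0 add0n. Qed.

Lemma toep_le2 n : toep n <= 2.
Proof.
elim: n {-2}n (leqnn n) => [|n IH] m Hm; rewrite toep_rec.
  by have -> : m = 0 by lia.
case: ifP => _; first by apply: IH; lia.
by case: (m %% 11) => [|[|[|[|[|[|[|[|[|[|[|]]]]]]]]]]].
Qed.

Lemma toep_22 n : toep n = 2 -> toep n.+1 = 2 -> n %% 11 = 4.
Proof.
have : n %% 11 < 11 by rewrite ltn_mod.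
case: (eqVneq (n %% 11) 10) => [n10 _ _|n10 lt11].
  by rewrite toep_mod; have -> : n.+1 %% 11 = 0 by lia.
rewrite toep_mod // => n2; case: (eqVneq (n %% 11) 9) => [n9|n9]; first by rewrite n9 in n2.
rewrite toep_mod (_ : n.+1 %% 11 = (n %% 11).+1); try lia.
by move: n2 n10 n9 lt11; case: (n %% 11) => [|[|[|[|[|[|[|[|[|[|[|]]]]]]]]]]].
Qed.

Lemma expn11_gt0 k : 0 < 11 ^ k. Proof. by rewrite expn_gt0. Qed.

Lemma toep_pal k n : n < 11 ^ k - 1 -> toep n = toep (11 ^ k - 2 - n).
Proof.
elim: k n => [|k IH] n; first by rewrite expn0.
rewrite expnS; have := expn11_gt0 k; move: (11 ^ k) IH => K IH K0 nK.
case: (eqVneq (n %% 11) 10) => [n10|n10].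
  rewrite (toep_mod_hole n10) (toep_mod_hole (n := 11 * K - 2 - n)); last by lia.
  by rewrite IH; [congr toep|]; lia.
rewrite toep_mod // toep_mod; last by lia.
have -> : (11 * K - 2 - n) %% 11 = 9 - n %% 11 by lia.
by move: n10 (ltn_pmod n (isT : 0 < 11)); case: (n %% 11) => [|[|[|[|[|[|[|[|[|[|[|]]]]]]]]]]].
Qed.

Lemma toep_shift k a n : n < 11 ^ k - 1 -> toep (a * 11 ^ k + n) = toep n.
Proof.
elim: k a n => [|k IH] a n; first by rewrite expn0.
rewrite expnS; have := expn11_gt0 k; move: (11 ^ k) IH => K IH K0 nK.
case: (eqVneq (n %% 11) 10) => [n10|n10].
  rewrite (toep_mod_hole n10) (toep_mod_hole (n := a * (11 * K) + n)); last by lia.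
  rewrite -(IH a (n %/ 11)); [congr toep|]; lia.
by rewrite (toep_mod n10) toep_mod; [congr nth|]; lia.
Qed.

Lemma toep_hole_end k t : 0 < t -> toep (t * 11 ^ k - 1) = toep (t - 1).
Proof.
move=> t0; elim: k => [|k IH]; first by rewrite expn0 muln1.
rewrite expnS; have := expn11_gt0 k; move: (11 ^ k) IH => K IH K0.
by rewrite toep_mod_hole -?IH; [congr toep|]; lia.
Qed.

Definition vk k : word := mkseq toep (11 ^ k - 1).

Lemma pal_vk k : pal (vk k).
Proof.
apply/palP => i; rewrite size_mkseq => Hi.
by rewrite !nth_mkseq ?(toep_pal Hi); [congr toep| |]; lia.
Qed.

Definition blocks (v : word) (l : seq nat) : word := flatten [seq v ++ [:: a] | a <- l].

Lemma size_blocks v l : size (blocks v l) = size l * (size v).+1.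
Proof. by elim: l => [|a l IH] //=; rewrite !size_cat IH /=; lia. Qed.

Lemma nth_blocks v l t r : t < size l -> r <= size v ->
  nth 0 (blocks v l) (t * (size v).+1 + r) =
  if r < size v then nth 0 v r else nth 0 l t.
Proof.
elim: l t => [|a l IH] [|t] //= Ht Hr.
- rewrite nth_cat size_cat /= addn1 ltnS Hr nth_cat.
  by case: ltngtP Hr => // -> _; rewrite subnn.
- rewrite nth_cat size_cat /= addn1 ifN; last by lia.
  have -> : t.+1 * (size v).+1 + r - (size v).+1 = t * (size v).+1 + r by lia.
  exact: IH.
Qed.

Lemma take_blocks (v r : word) l t : t <= size l ->
  take (t * (size v).+1) (blocks v l ++ r) = blocks v (take t l).
Proof.
elim: l t => [|a l IH] [|t] Ht; rewrite ?mul0n ?take0 //= -catA take_cat size_cat /= addn1.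
rewrite ifN; last by lia.
have -> : t.+1 * (size v).+1 - (size v).+1 = t * (size v).+1 by lia.
by rewrite IH.
Qed.

Definition vsep : seq nat := [:: 0; 1; 1; 0; 2; 2].

Lemma blocks_vsep (v : word) :
  blocks v vsep = v ++ 0 :: v ++ 1 :: v ++ 1 :: v ++ 0 :: v ++ 2 :: v ++ [:: 2].
Proof. by rewrite /blocks /= !cats0 -!catA. Qed.

Lemma blocks_vk k : blocks (vk k) vsep = mkseq toep (6 * 11 ^ k).
Proof.
have := expn11_gt0 k; have := toep_hole_end k; have := @toep_shift k.
rewrite /vk; move: (11 ^ k) => K shiftK endK K0.
have SK : (size (mkseq toep (K - 1))).+1 = K by rewrite size_mkseq; lia.
apply: eq_mkseq_nth => [|i Hi]; first by rewrite size_blocks SK.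
have Ei : i = (i %/ K) * (size (mkseq toep (K - 1))).+1 + i %% K.
  by rewrite SK; apply: divn_eq.
have Ht : i %/ K < 6 by rewrite ltn_divLR //; lia.
have Hr : i %% K < K by rewrite ltn_mod.
rewrite {1}Ei nth_blocks ?size_mkseq //; last by lia.
case: ifP => Hr'.
  by rewrite nth_mkseq // [in RHS](divn_eq i K) shiftK.
have Ei' : i = (i %/ K).+1 * K - 1 by have := divn_eq i K; lia.
rewrite [in RHS]Ei' endK // toep_small; last by lia.
by move: Ht; rewrite subn1 /=; case: (i %/ K) => [|[|[|[|[|[|]]]]]].
Qed.

Definition pal_span (a n : nat) : Prop := forall t, t <= n - a -> toep (a + t) = toep (n - t).

Lemma pal_spanP N a : a < N -> reflect (pal_span a N.-1) (pal (drop a (mkseq toep N))).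
Proof.
move=> aN; apply: (iffP (palP _)); rewrite size_drop size_mkseq => H t Ht.
  have := H t ltac:(lia); rewrite !nth_drop !nth_mkseq; try lia.
  by move=> ->; congr toep; lia.
rewrite !nth_drop !nth_mkseq; try lia.
by rewrite H; [congr toep|]; lia.
Qed.

(* A palindromic suffix longer than 11 contains a factor 22 whose mirror image is
   again 22, so by [toep_22] it starts at a hole; reading it at the holes gives a
   palindromic suffix of the previous level. *)
Lemma toep_pal_suffix_short k a : a < 6 * 11 ^ k -> pal_span a (6 * 11 ^ k - 1) ->
  6 * 11 ^ k - a <= 11 ^ k + 1.
Proof.
elim: k a => [|k IH] a.
  rewrite expn0 => Ha H; have := H 0 ltac:(lia).
  rewrite addn0 (toep_small (r := 5)) // toep_small; last by lia.
  by move: Ha; clear; case: a => [|[|[|[|[|[|]]]]]].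
rewrite expnS; have := expn11_gt0 k; move: (11 ^ k) IH => K IH K0 Ha H.
case: (leqP (6 * (11 * K) - a) 11) => long; first by lia.
set t0 := (15 - a %% 11) %% 11.
have two1 : toep (a + t0) = 2.
  by rewrite toep_mod (_ : (a + t0) %% 11 = 4) //; rewrite /t0; lia.
have two2 : toep (a + t0.+1) = 2.
  by rewrite toep_mod (_ : (a + t0.+1) %% 11 = 5) //; rewrite /t0; lia.
rewrite H in two1; last by rewrite /t0; lia.
rewrite H in two2; last by rewrite /t0; lia.
have : (6 * (11 * K) - 1 - t0.+1) %% 11 = 4.
  apply: toep_22 => //.
  by rewrite (_ : (6 * (11 * K) - 1 - t0.+1).+1 = 6 * (11 * K) - 1 - t0) //; rewrite /t0; lia.
rewrite /t0 => a10; have Ea : a = 11 * (a %/ 11) + 10 by have := divn_eq a 11; lia.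
suff : 6 * K - a %/ 11 <= K + 1 by lia.
apply: IH; first by lia.
move=> t Ht; rewrite -toep_hole -(toep_hole (6 * K - 1 - t)).
rewrite (_ : 11 * (a %/ 11 + t) + 10 = a + 11 * t); last by lia.
by rewrite H; [congr toep|]; lia.
Qed.

Lemma pclos_toep k : pclos (mkseq toep (6 * 11 ^ k)) = vk k.+1.
Proof.
have short := @toep_pal_suffix_short k; have := pal_vk k.+1; have := @toep_pal k.+1.
rewrite /vk expnS; have := expn11_gt0 k; move: (11 ^ k) short => K short K0 palK Pv.
set u := mkseq toep (6 * K).
have Su : size u = 6 * K by rewrite size_mkseq.
have clos : u ++ rev (take (5 * K - 1) u) = mkseq toep (11 * K - 1).
  apply: eq_mkseq_nth => [|i Hi]; first by rewrite size_cat size_rev size_take Su; case: ifP; lia.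
  rewrite nth_cat Su; case: ifP => iu; first by rewrite nth_mkseq.
  rewrite nth_rev size_take Su ifT; try lia.
  by rewrite nth_take ?nth_mkseq ?(palK i); [congr toep| | | ]; lia.
rewrite (pclosE (k := 5 * K - 1)) ?clos ?Su //; first by lia.
move=> j jK; have jN : j < 6 * K by lia.
apply/negP => /(pal_spanP jN); rewrite (_ : (6 * K).-1 = 6 * K - 1) => [Pj|]; last by lia.
by have := short j jN Pj; lia.
Qed.

Lemma vfin_vk k : vfin k = vk k.
Proof. by elim: k => [//|k IH] /=; rewrite IH -blocks_vsep blocks_vk pclos_toep. Qed.

Lemma vlim_toep n : vlim n = toep n.
Proof.
rewrite /vlim vfin_vk /vk nth_mkseq //.
by have := ltn_expl n.+1 (isT : 1 < 11); lia.
Qed.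

Lemma iprefix_vlim n : iprefix vlim n = mkseq toep n.
Proof. by apply: eq_mkseq => i; rewrite vlim_toep. Qed.

(** * Richness of v *)

Definition occurs_at (a L b : nat) : Prop :=
  forall t, t <= L -> toep (b + t) = toep (a + t).

(* The prefix of length n + 1 has a palindromic suffix, starting at a, that occurs
   nowhere earlier. *)
Definition new_pal_at (n : nat) : Prop :=
  exists2 a, a <= n & pal_span a n /\ forall b, b < a -> ~ occurs_at a (n - a) b.

Lemma pal_span_lift a n : a <= n -> (a + n) %% 11 = 9 ->
  (forall i, a <= i <= n -> i %% 11 = 10 -> toep i = toep (a + n - i)) -> pal_span a n.
Proof.
move=> an an9 holes t tn; case: (eqVneq ((a + t) %% 11) 10) => [at10|at10].
  by rewrite holes; [congr toep| |]; lia.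
rewrite toep_mod // toep_mod; last by lia.
rewrite (_ : (n - t) %% 11 = 9 - (a + t) %% 11); last by lia.
move: at10 (ltn_pmod (a + t) (isT : 0 < 11)).
by case: (_ %% 11) => [|[|[|[|[|[|[|[|[|[|[|]]]]]]]]]]].
Qed.

(* The factor 22 at positions 4, 5 of the pattern synchronises long factors. *)
Lemma occurs_at_align a L b : 11 <= L -> occurs_at a L b -> b %% 11 = a %% 11.
Proof.
move=> L11 occ; set t0 := (15 - a %% 11) %% 11.
have two1 : toep (b + t0) = 2.
  rewrite occ; last by rewrite /t0; lia.
  by rewrite toep_mod (_ : (a + t0) %% 11 = 4) //; rewrite /t0; lia.
have two2 : toep (b + t0).+1 = 2.
  rewrite -addnS occ; last by rewrite /t0; lia.
  by rewrite toep_mod (_ : (a + t0.+1) %% 11 = 5) //; rewrite /t0; lia.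
by have := toep_22 two1 two2; rewrite /t0; lia.
Qed.

(* The window of length L at residue r of the Toeplitz word, its (at most one, for
   L <= 11) hole filled with y. *)
Definition window r y L : word :=
  mkseq (fun t => if (r + t) %% 11 == 10 then y else nth 0 vpat ((r + t) %% 11)) L.

(* Every occurrence of P in the Toeplitz word covers a hole carrying c, at one of
   the offsets ds. *)
Definition forces_hole (P : word) c (ds : seq nat) : bool :=
  all (fun r => all (fun y => (window r y (size P) == P) ==>
                      (y == c) && has (fun d => (r + d) %% 11 == 10) ds) [:: 0; 1; 2])
    (iota 0 11).

Lemma forces_holeP (P : word) c ds b :
  size P <= 11 -> all (fun d => d < size P) ds -> forces_hole P c ds ->
  (forall t, t < size P -> toep (b + t) = nth 0 P t) ->
  exists2 d, d \in ds & toep (b + d) = c /\ (b + d) %% 11 = 10.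
Proof.
move=> P11 dsP check occ; set r := b %% 11; set y := toep (b + (10 - r)).
have y012 : y \in [:: 0; 1; 2].
  by have := toep_le2 (b + (10 - r)); rewrite /y; case: toep => [|[|[|]]].
have win : window r y (size P) = P.
  apply/esym/eq_mkseq_nth => // t tP; rewrite -occ //.
  case: ifP => /eqP t10; first by rewrite /y; congr toep; lia.
  by rewrite toep_mod; [congr nth|]; lia.
have r11 : r \in iota 0 11 by rewrite mem_iota ltn_mod.
have /allP /(_ y y012) := allP check r r11.
rewrite win eqxx => /andP [/eqP yc /hasP [d dds /eqP d10]].
have := allP dsP d dds => dP.
exists d => //; rewrite -yc /y; split; [congr toep|]; lia.
Qed.

Definition new_pal_atb (n : nat) : bool :=
  has (fun a => all (fun t => toep (a + t) == toep (n - t)) (iota 0 (n - a).+1) &&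
      all (fun b => ~~ all (fun t => toep (b + t) == toep (a + t)) (iota 0 (n - a).+1))
        (iota 0 a))
    (iota 0 n.+1).

Lemma new_pal_atP n : new_pal_atb n -> new_pal_at n.
Proof.
move=> /hasP [a]; rewrite mem_iota => an /andP [/allP Pa /allP Na].
exists a; first by lia.
split=> [t tn|b ba occ]; first by apply/eqP/Pa; rewrite mem_iota; lia.
have /negP := Na b ltac:(rewrite mem_iota; lia); apply.
by apply/allP => t; rewrite mem_iota => tn; apply/eqP/occ; lia.
Qed.

Lemma new_pal_at_small n : n < 10 -> new_pal_at n.
Proof. by move=> n10; apply: new_pal_atP; move: n n10; do 10?case => //; vm_compute. Qed.

(* The letters of the Toeplitz word at the holes 11 i + 10 reproduce the word, so
   a new palindrome [a', m] yields the new palindrome around it whose holes are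
   11 a' + 10, ..., 11 m + 10. *)
Lemma new_pal_at_lift m a' d : d <= 10 -> a' < m -> pal_span a' m ->
  (forall b, b < a' -> ~ occurs_at a' (m - a') b) -> new_pal_at (11 * m + 10 + d).
Proof.
move=> d10 a'm Pa' Na'; exists (11 * a' + 10 - d); first by lia.
split=> [|b ba occ].
  apply: pal_span_lift; [lia|lia|] => i Hi i10.
  rewrite (toep_mod_hole i10) (toep_mod_hole (n := 11 * a' + 10 - d + (11 * m + 10 + d) - i));
    last by lia.
  rewrite -(subnKC (_ : a' <= i %/ 11)); last by lia.
  by rewrite Pa'; [congr toep|]; lia.
have b10 : b %% 11 = 10 - d by have := occurs_at_align _ occ; lia.
apply: (Na' (b %/ 11)); first by lia.
move=> u ua; rewrite -toep_hole -(toep_hole (a' + u)).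
rewrite (_ : 11 * (b %/ 11 + u) + 10 = b + (11 * u + d)); last by lia.
by rewrite occ; [congr toep|]; lia.
Qed.

Lemma new_pal_at_fresh_center m d : 1 <= d <= 10 ->
  (forall b, b < m -> toep b <> toep m) -> new_pal_at (11 * m + 10 + d).
Proof.
move=> d10 fresh; exists (11 * m + 10 - d); first by lia.
split=> [|b ba occ].
  apply: pal_span_lift; [lia|lia|] => i Hi i10.
  by rewrite (_ : i = 11 * m + 10); [congr toep|]; lia.
(* An earlier occurrence contains the factor 0 c 0 around its centre, and every
   occurrence of 0 c 0 is centred at a hole carrying c. *)
have occ0c0 t : t < 3 -> toep (b + (d - 1) + t) = nth 0 [:: 0; toep m; 0] t.
  move=> t3; rewrite -addnA occ; last by lia.
  rewrite (_ : 11 * m + 10 - d + (d - 1 + t) = 11 * m + 9 + t); last by lia.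
  move: t3; case: t => [|[|[|//]]] _ /=; rewrite ?addn0.
  - by rewrite toep_pat.
  - by rewrite -addnA toep_hole.
  - by rewrite (_ : 11 * m + 9 + 2 = 11 * m.+1 + 0) ?toep_pat //; lia.
have forced : forces_hole [:: 0; toep m; 0] (toep m) [:: 1].
  by have := toep_le2 m; case: (toep m) => [|[|[|]]].
have [e] := forces_holeP (P := [:: 0; toep m; 0]) (ds := [:: 1]) isT isT forced occ0c0.
rewrite inE => /eqP -> [c10 h10].
by apply: (fresh ((b + (d - 1) + 1) %/ 11)); [lia | rewrite -toep_mod_hole].
Qed.

Lemma new_pal_at_fresh_hole_len j L ds : 2 <= L <= 11 ->
  (forall b, b < j -> toep b <> toep j) ->
  pal (rcons (drop (11 - L) vpat) (toep j)) -> all (fun d => d < L) ds ->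
  forces_hole (rcons (drop (11 - L) vpat) (toep j)) (toep j) ds ->
  new_pal_at (11 * j + 10).
Proof.
set P := rcons _ _ => L11 fresh PP dsL forced.
have SP : size P = L by rewrite size_rcons size_drop /=; lia.
have occP t : t < L -> toep (11 * j + 11 - L + t) = nth 0 P t.
  move=> tL; rewrite nth_rcons size_drop /=; case: ifP => tL'.
    by rewrite nth_drop -(toep_pat j); [congr toep|]; lia.
  have -> : t = L - 1 by lia.
  rewrite ifT; last by apply/eqP; lia.
  by rewrite -(toep_hole j); congr toep; lia.
exists (11 * j + 11 - L); first by lia.
split=> [t tn|b bj occ].
  move/palP: PP; rewrite SP => PP.
  rewrite occP; last by lia.
  rewrite PP; last by lia.
  by rewrite -occP; [congr toep|]; lia.
have occPb t : t < size P -> toep (b + t) = nth 0 P t.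
  by rewrite SP => tL; rewrite occ -1?occP //; lia.
have dsP : all (fun d => d < size P) ds by rewrite SP.
have [e eds [ec e10]] := forces_holeP (ltac:(lia) : size P <= 11) dsP forced occPb.
by apply: (fresh ((b + e) %/ 11)); [have := allP dsL e eds; lia | rewrite -toep_mod_hole].
Qed.

(* The new palindromes 00, 101 and 201102 end at the hole. *)
Lemma new_pal_at_fresh_hole j :
  (forall b, b < j -> toep b <> toep j) -> new_pal_at (11 * j + 10).
Proof.
move=> fresh; have := toep_le2 j; case E: (toep j) => [|[|[|//]]] _.
- by apply: (new_pal_at_fresh_hole_len (L := 2) (ds := [:: 0; 1]) isT fresh); rewrite ?E.
- by apply: (new_pal_at_fresh_hole_len (L := 3) (ds := [:: 0; 2]) isT fresh); rewrite ?E.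
- by apply: (new_pal_at_fresh_hole_len (L := 6) (ds := [:: 0; 5]) isT fresh); rewrite ?E.
Qed.

Lemma new_pal_at_all n : new_pal_at n.
Proof.
elim: n {-2}n (leqnn n) => [|N IH] n nN; first by apply: new_pal_at_small; lia.
case: (ltnP n 10) => [|n10]; first exact: new_pal_at_small.
have [m [d [d10 En]]] : exists m d, d <= 10 /\ n = 11 * m + 10 + d.
  case: (eqVneq (n %% 11) 10) => n11.
    by exists (n %/ 11), 0; split => //; have := divn_eq n 11; lia.
  by exists (n %/ 11 - 1), (n %% 11).+1; split; [|have := divn_eq n 11]; lia.
subst n; have [a' a'm [Pa' Na']] := IH m ltac:(lia).
case: (ltnP a' m) => [a'm'|ma']; first exact: new_pal_at_lift d10 a'm' Pa' Na'.
have fresh b : b < m -> toep b <> toep m.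
  move=> bm E; have a'_eq : a' = m by lia.
  apply: (Na' b); rewrite a'_eq // => t; rewrite subnn leqn0 => /eqP ->.
  by rewrite !addn0.
case: d d10 {n10 nN} => [|d] d10; first by rewrite addn0; apply: new_pal_at_fresh_hole.
by apply: new_pal_at_fresh_center.
Qed.

Lemma rich_vlim : rich vlim.
Proof.
move=> n; rewrite iprefix_vlim; elim: n => [//|n IH]; rewrite mkseqS.
have [a an [Pa Na]] := new_pal_at_all n.
have Sa : size (drop a (mkseq toep n.+1)) = n.+1 - a by rewrite size_drop size_mkseq.
have nth_a t : t < n.+1 - a -> nth 0 (drop a (mkseq toep n.+1)) t = toep (a + t).
  by move=> tn; rewrite nth_drop nth_mkseq //; lia.
rewrite (defect_rcons_new (u := drop a (mkseq toep n.+1))) //.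
- by rewrite -mkseqS suffix_drop.
- have an' : a < n.+1 by lia.
  exact/(pal_spanP an').
apply/negP => /infixP [s [s' E]].
have Hs : size s + (n.+1 - a) <= n.
  by have := congr1 size E; rewrite !size_cat Sa size_mkseq; lia.
apply: (Na (size s)); first by lia.
move=> t tn; rewrite -nth_a; last by lia.
rewrite -(@nth_mkseq _ 0 toep n (size s + t)); last by lia.
by rewrite E nth_cat ltnNge leq_addr /= addKn nth_cat Sa ifT //; lia.
Qed.

(** * The defect of phi(v) *)

Lemma morph_word_cat (f : nat -> word) u v :
  morph_word f (u ++ v) = morph_word f u ++ morph_word f v.
Proof. by rewrite /morph_word map_cat flatten_cat. Qed.

Notation phiw := (morph_word phi).

Definition w010 : word := [:: 0; 1; 0].

Definition phi_end (a : nat) : word :=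
  match a with 0 => [:: 0] | 1 => [:: 1; 1] | _ => [:: 1; 1; 1] end.

Lemma phiE a : phi a = w010 ++ phi_end a.
Proof. by case: a => [|[|]]. Qed.

Lemma phiw_cons a w : phiw (a :: w) = phi a ++ phiw w.
Proof. by []. Qed.

Definition ternary (w : word) : bool := all (fun x => x <= 2) w.

Lemma ternary_toep n : ternary (mkseq toep n).
Proof. by apply/allP => x /mapP [i _ ->]; apply: toep_le2. Qed.

Lemma rev_phiw_010 w : rev (phiw w ++ w010) = phiw (rev w) ++ w010.
Proof.
elim: w => [//|a w IH]; rewrite phiw_cons phiE -!catA !rev_cat -catA !catA -rev_cat IH.
rewrite rev_cons -cats1 morph_word_cat phiw_cons phiE /= cats0.
have -> : rev (phi_end a) = phi_end a by case: a => [|[|]].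
by rewrite -!catA.
Qed.

Lemma phiw_010_head w Y : exists Z, phiw w ++ w010 ++ Y = w010 ++ Z.
Proof.
case: w => [|a w]; first by exists Y.
by exists (phi_end a ++ phiw w ++ w010 ++ Y); rewrite phiw_cons phiE -!catA.
Qed.

Lemma phi_010_inner a (A B Z : word) : a <= 2 ->
  phi a ++ w010 ++ Z = A ++ w010 ++ B -> 0 < size A < size (phi a) -> False.
Proof.
move=> a2 E Aa; have := congr1 (fun s => take 3 (drop (size A) s)) E.
rewrite [in X in _ = X]drop_size_cat // catA drop_cat ifT; last by rewrite size_cat /=; lia.
rewrite take_cat ifT; last by rewrite size_drop size_cat /=; lia.
move: Aa; move: (size A) => i; clear E.
by case: a a2 => [|[|[|//]]] _; case: i => [|[|[|[|[|[|]]]]]].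
Qed.

Lemma phiw_010_cut (W Y A B : word) : ternary W ->
  phiw W ++ w010 ++ Y = A ++ w010 ++ B -> size A <= size (phiw W) ->
  exists2 m, m <= size W & A = phiw (take m W).
Proof.
elim: W A => [|a W IH] A; first by case: A => // _ _ _; exists 0.
move=> /andP [a2 W2] E AW; case: (posnP (size A)) => [/size0nil -> | A0]; first by exists 0.
have [Z EZ] := phiw_010_head W Y.
case: (ltnP (size A) (size (phi a))) => Aa.
  case: (@phi_010_inner a A B Z) => //; last by rewrite A0.
  by move: E; rewrite phiw_cons -catA EZ.
move: E; rewrite phiw_cons -catA => E.
have EA := eq_cat_prefix E Aa; rewrite EA -!catA in E.
move/eqP: E; rewrite eqseq_cat // => /andP [_ /eqP E].
have AW' : size (drop (size (phi a)) A) <= size (phiw W).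
  by move: AW; rewrite {1}EA phiw_cons !size_cat leq_add2l.
have [m mW Em] := IH _ W2 E AW'.
by exists m.+1; [rewrite /=; lia | rewrite {1}EA Em].
Qed.

Lemma phi_end_inj a b (Z1 Z2 : word) : a <= 2 -> b <= 2 ->
  phi_end a ++ w010 ++ Z1 = phi_end b ++ w010 ++ Z2 -> a = b.
Proof.
move=> a2 b2 E; have E0 := congr1 (nth 0 ^~ 0) E; have E2 := congr1 (nth 0 ^~ 2) E.
by move: a2 b2 E0 E2; clear E; case: a => [|[|[|//]]] _; case: b => [|[|[|//]]].
Qed.

Lemma phiw_010_prefix (W V Y B : word) : ternary W -> ternary V ->
  phiw W ++ w010 ++ Y = phiw V ++ w010 ++ B -> size (phiw V) <= size (phiw W) -> prefix V W.
Proof.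
elim: V W => [|b V IH] [|a W] // W3 /andP [b2 V2] E VW.
  by move: VW; rewrite phiw_cons size_cat; case: (b) => [|[|]] /=; lia.
move: W3 E => /andP [a2 W2]; rewrite !phiw_cons !phiE -!catA => /eqP.
rewrite eqseq_cat // => /andP [_ /eqP E].
have [Z1 E1] := phiw_010_head W Y; have [Z2 E2] := phiw_010_head V B.
have ab : a = b by apply: (phi_end_inj (Z1 := Z1) (Z2 := Z2)); rewrite // -E1 -E2.
subst b; move/eqP: E; rewrite eqseq_cat // => /andP [_ /eqP E].
by rewrite /= eqxx; apply: IH => //; move: VW; rewrite !size_cat leq_add2l.
Qed.

Lemma phiw_010_occ (W V Y A B : word) : ternary W -> ternary V ->
  phiw W ++ w010 ++ Y = A ++ (phiw V ++ w010) ++ B ->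
  size A + size (phiw V) <= size (phiw W) ->
  exists m, [/\ m <= size W, A = phiw (take m W) & prefix V (drop m W)].
Proof.
move=> W3 V3 E AVW; have [Z EZ] := phiw_010_head V B.
have [m mW Em] : exists2 m, m <= size W & A = phiw (take m W).
  by apply: (@phiw_010_cut W Y A Z) => //; [rewrite E -catA EZ | lia].
exists m; split=> //.
have W3' : ternary (drop m W).
  by move: W3; rewrite -{1}(cat_take_drop m W) /ternary all_cat => /andP [].
apply: (@phiw_010_prefix _ _ Y B) => //.
  move/eqP: E; rewrite -{1}(cat_take_drop m W) morph_word_cat -catA Em.
  by rewrite eqseq_cat // -catA => /andP [_ /eqP].
move: AVW; rewrite Em -{2}(cat_take_drop m W) morph_word_cat size_cat; lia.
Qed.

Lemma size_phiw w : 4 * size w <= size (phiw w).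
Proof. by elim: w => [//|a w IH]; rewrite phiw_cons size_cat; case: a => [|[|a]] /=; lia. Qed.

Lemma phiw_toep_prefix m n : m <= n -> prefix (phiw (mkseq toep m)) (phiw (mkseq toep n)).
Proof. by move=> /subnKC <-; rewrite mkseqD morph_word_cat prefix_prefix. Qed.

Lemma size_phiw_toep m d :
  size (phiw (mkseq toep m)) + 4 * d <= size (phiw (mkseq toep (m + d))).
Proof.
rewrite mkseqD morph_word_cat size_cat leq_add2l.
by have := size_phiw (map toep (iota m d)); rewrite size_map size_iota.
Qed.

Lemma iprefix_phi_vlim m N : N <= size (phiw (mkseq toep m)) ->
  iprefix (morph_iword phi vlim) N = take N (phiw (mkseq toep m)).
Proof.
move=> Nm; apply: (@eq_from_nth _ 0); rewrite size_mkseq ?size_takel // => i iN.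
rewrite nth_mkseq // nth_take // /morph_iword iprefix_vlim.
case: (leqP i.+1 m) => im.
  apply: prefix_nth (phiw_toep_prefix im) _.
  by have := size_phiw (mkseq toep i.+1); rewrite size_mkseq; lia.
by apply/esym/prefix_nth; [apply: phiw_toep_prefix; lia | lia].
Qed.

Lemma toep_occ_vk_dvd k m :
  (forall t, t < 11 ^ k - 1 -> toep (m + t) = toep t) -> 11 ^ k %| m.
Proof.
elim: k m => [|k IH] m occ; first by rewrite expn0 dvd1n.
move: occ; rewrite expnS; have := expn11_gt0 k; move: (11 ^ k) IH => K IH K0 occ.
have m4 : (m + 4) %% 11 = 4.
  apply: toep_22; first by rewrite occ ?toep_small //; lia.
  by rewrite -addnS occ ?toep_small //; lia.
have Em : m = 11 * (m %/ 11) by have := divn_eq m 11; lia.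
rewrite [in X in _ %| X]Em dvdn_pmul2l //; apply: IH => t tK.
rewrite -toep_hole -(toep_hole t) (_ : 11 * (m %/ 11 + t) + 10 = m + (11 * t + 10)).
  by apply: occ; lia.
by lia.
Qed.

Definition pblocks (p : word) (l : seq nat) : word :=
  flatten [seq p ++ phi_end a | a <- l].

Lemma pblocks_cat p l1 l2 : pblocks p (l1 ++ l2) = pblocks p l1 ++ pblocks p l2.
Proof. by rewrite /pblocks map_cat flatten_cat. Qed.

Lemma phiw_blocks v l : phiw (blocks v l) = pblocks (phiw v ++ w010) l.
Proof.
elim: l => [//|a l IH].
rewrite (_ : blocks v (a :: l) = (v ++ [:: a]) ++ blocks v l) // !morph_word_cat IH.
rewrite phiw_cons phiE cats0 -!catA.
by rewrite [RHS]/pblocks /= -/(pblocks _ l) -!catA.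
Qed.

Definition vsep5 : seq nat := [:: 0; 1; 1; 0; 2].

Lemma blocks_vsep5 k : blocks (vk k) vsep5 ++ vk k = mkseq toep (6 * 11 ^ k - 1).
Proof.
have E : mkseq toep (6 * 11 ^ k) = (blocks (vk k) vsep5 ++ vk k) ++ [:: 2].
  by rewrite -blocks_vk /blocks /= !cats0 -!catA.
have S : size (blocks (vk k) vsep5 ++ vk k) = 6 * 11 ^ k - 1.
  by rewrite size_cat size_blocks size_mkseq /=; have := expn11_gt0 k; lia.
apply: eq_mkseq_nth => // i Hi.
have := congr1 (nth 0 ^~ i) E; rewrite nth_mkseq ?nth_cat ?S ?Hi //; lia.
Qed.

Definition pk k : word := phiw (vk k) ++ w010.

Lemma phiw_toep_010 k :
  phiw (mkseq toep (6 * 11 ^ k - 1)) ++ w010 = pblocks (pk k) vsep5 ++ pk k.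
Proof. by rewrite -blocks_vsep5 morph_word_cat phiw_blocks -catA. Qed.

Lemma pk_occ k A B : pblocks (pk k) vsep5 ++ pk k = A ++ pk k ++ B ->
  exists2 t, t <= 5 & A = pblocks (pk k) (take t vsep5).
Proof.
rewrite -phiw_toep_010 /pk => E; set W := mkseq toep (6 * 11 ^ k - 1) in E *.
have AV : size A + size (phiw (vk k)) <= size (phiw W).
  by have := congr1 size E; rewrite !size_cat; lia.
have [m [mW Em pre]] := @phiw_010_occ W (vk k) [::] A B (ternary_toep _) (ternary_toep _)
  ltac:(by rewrite E -catA) AV.
have K0 := expn11_gt0 k; have Sv : size (vk k) = 11 ^ k - 1 by rewrite size_mkseq.
have dvd_m : 11 ^ k %| m.
  apply: toep_occ_vk_dvd => t tK; have := prefix_nth (i := t) pre; rewrite Sv => /(_ tK).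
  have := size_prefix pre; rewrite Sv size_drop size_mkseq => ?.
  by rewrite nth_drop !nth_mkseq //; lia.
case/dvdnP: dvd_m => t Et.
have t5 : t <= 5.
  have : t * 11 ^ k < 6 * 11 ^ k by move: mW; rewrite size_mkseq Et; lia.
  by rewrite ltn_pmul2r.
exists t => //; rewrite Em /W -blocks_vsep5 Et (_ : 11 ^ k = (size (vk k)).+1); last by lia.
by rewrite take_blocks ?phiw_blocks.
Qed.

Section OnesAfterBlocks.

Variable p : word.
Hypothesis pal_p : pal p.
Hypothesis p_head : p = 0 :: behead p.
Hypothesis p_occ : forall A B, pblocks p vsep5 ++ p = A ++ p ++ B ->
  exists2 t, t <= 5 & A = pblocks p (take t vsep5).

Lemma pblocks_vsep5 : pblocks p vsep5 =
  p ++ [:: 0] ++ p ++ [:: 1; 1] ++ p ++ [:: 1; 1] ++ p ++ [:: 0] ++ p ++ [:: 1; 1; 1].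
Proof. by rewrite /pblocks /= cats0 -!catA. Qed.

Lemma pal_ones_mirror j (s x : word) :
  pal (s ++ [:: 1; 1; 1] ++ p ++ nseq j 1) ->
  s ++ [:: 1; 1; 1] ++ p ++ nseq j 1 = nseq j 1 ++ p ++ x -> take 3 x = [:: 1; 1; 1].
Proof.
move=> /eqP; rewrite !rev_cat rev_nseq (eqP pal_p) -!catA => <- E.
have := congr1 (fun w => take 3 (drop (size (nseq j 1 ++ p)) w)) E.
by rewrite !(catA (nseq j 1) p) !drop_size_cat //= take0 => <-.
Qed.

(* A palindromic suffix not longer than |p| + 2j is a prefix of the palindrome
   1^j p 1^j, which already occurs in p 11 p 11 p. *)
Lemma pal_suffix_ones_short j (u : word) : 0 < j <= 2 ->
  size u <= size (nseq j 1 ++ p ++ nseq j 1) ->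
  suffix u (pblocks p vsep5 ++ p ++ nseq j 1) -> pal u -> infix u (pblocks p vsep5 ++ p).
Proof.
move=> j12 short Su Pu; set S := nseq j 1 ++ p ++ nseq j 1.
have PS : pal S by rewrite /pal /S !rev_cat rev_nseq (eqP pal_p) catA.
have SS : suffix S (pblocks p vsep5 ++ p ++ nseq j 1).
  apply/suffixP.
  exists (p ++ [:: 0] ++ p ++ [:: 1; 1] ++ p ++ [:: 1; 1] ++ p ++ [:: 0] ++ p ++ nseq (3 - j) 1).
  rewrite pblocks_vsep5 /S -[[:: 1; 1; 1]]/(nseq 3 1) (nseqD_sub 1 (_ : j <= 3)) ?catA //; lia.
have uS : suffix u S := suffix_suffix_size Su SS short.
apply: infix_trans (prefixW (pal_suffix_prefix Pu PS uS)) _.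
apply/infixP; exists (p ++ [:: 0] ++ p ++ nseq (2 - j) 1),
  (nseq (2 - j) 1 ++ p ++ [:: 0] ++ p ++ [:: 1; 1; 1] ++ p).
rewrite pblocks_vsep5 /S -[[:: 1; 1]]/(nseq 2 1) {1}(nseqD_sub 1 (_ : j <= 2)); last by lia.
rewrite (nseqD_sub 1 (_ : 2 - j <= 2)) ?subKn; try lia.
by rewrite -!catA.
Qed.

(* A longer one ends with 1^(j+1) p 1^j, so it starts with 1^j p 1^(j+1), and
   this occurrence of p sits at a block boundary. *)
Lemma pal_suffix_ones_boundary j (u : word) : 0 < j <= 2 ->
  size (nseq j 1 ++ p ++ nseq j 1) < size u ->
  suffix u (pblocks p vsep5 ++ p ++ nseq j 1) -> pal u ->
  exists2 t, t <= 5 & last 0 (pblocks p (take t vsep5)) = 1 /\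
    u = nseq j 1 ++ pblocks p (drop t vsep5) ++ p ++ nseq j 1.
Proof.
move=> j12 long Su Pu; set S := nseq j.+1 1 ++ p ++ nseq j 1.
have SS : suffix S (pblocks p vsep5 ++ p ++ nseq j 1).
  apply/suffixP.
  exists (p ++ [:: 0] ++ p ++ [:: 1; 1] ++ p ++ [:: 1; 1] ++ p ++ [:: 0] ++ p ++ nseq (2 - j) 1).
  rewrite pblocks_vsep5 /S -[[:: 1; 1; 1]]/(nseq 3 1) (nseqD_sub 1 (_ : j.+1 <= 3)) ?catA //; lia.
have /suffix_wordP [u' Eu'] : suffix S u.
  by apply: suffix_suffix_size SS Su _; move: long; rewrite /S !size_cat /=.
have Eu : u = nseq j 1 ++ p ++ nseq j.+1 1 ++ rev u'.
  by move/eqP: Pu => <-; rewrite Eu' /S !rev_cat !rev_nseq (eqP pal_p) -!catA.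
case/suffix_wordP: Su => Z EZ.
have EP : (pblocks p vsep5 ++ p) ++ nseq j 1 =
    ((Z ++ nseq j 1) ++ p) ++ nseq j.+1 1 ++ rev u'.
  by rewrite -catA EZ Eu -!catA.
have [t t5 EA] : exists2 t, t <= 5 & Z ++ nseq j 1 = pblocks p (take t vsep5).
  apply: p_occ; rewrite catA; apply: eq_cat_prefix (esym EP) _.
  by have := congr1 size EP; rewrite !size_cat !size_nseq; lia.
exists t => //; split.
  by rewrite -EA last_cat; case: j j12 {long S SS Eu' Eu EP EA EZ} => [|[|[|]]].
move: EZ; rewrite -{1}(cat_take_drop t vsep5) pblocks_cat -EA -!catA => /eqP.
by rewrite eqseq_cat // => /andP [_ /eqP <-].
Qed.

Lemma pal_suffix_ones_long j (u : word) : 0 < j <= 2 ->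
  size (nseq j 1 ++ p ++ nseq j 1) < size u ->
  suffix u (pblocks p vsep5 ++ p ++ nseq j 1) -> pal u -> False.
Proof.
move=> j12 long Su Pu; have [t t5 [last1 Eu]] := pal_suffix_ones_boundary j12 long Su Pu.
(* Boundaries 0, 1, 4 are preceded by nothing or by 0, at boundary 5 the word u
   is too short, and at boundaries 2, 3 the mirror image of the final 111 p 1^j
   does not fit. *)
move: t5 last1 Eu; case: t => [|[|[|[|[|[|//]]]]]] _ //=; rewrite ?last_cat //.
- move=> _ Eu; have E1 : u = nseq j 1 ++ p ++ [:: 1; 1] ++ p ++ [:: 0] ++ p ++
                             [:: 1; 1; 1] ++ p ++ nseq j 1.
    by rewrite Eu /pblocks /= -!catA.
  have := @pal_ones_mirror j (nseq j 1 ++ p ++ [:: 1; 1] ++ p ++ [:: 0] ++ p)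
    ([:: 1; 1] ++ p ++ [:: 0] ++ p ++ [:: 1; 1; 1] ++ p ++ nseq j 1).
  by rewrite -!catA -E1 => /(_ Pu erefl); rewrite p_head.
- move=> _ Eu; have E1 : u = nseq j 1 ++ p ++ [:: 0] ++ p ++ [:: 1; 1; 1] ++ p ++ nseq j 1.
    by rewrite Eu /pblocks /= -!catA.
  have := @pal_ones_mirror j (nseq j 1 ++ p ++ [:: 0] ++ p)
    ([:: 0] ++ p ++ [:: 1; 1; 1] ++ p ++ nseq j 1).
  by rewrite -!catA -E1 => /(_ Pu erefl).
- by move=> _ Eu; move: long; rewrite Eu /pblocks /= ltnn.
Qed.

Lemma defect_pblocks_11 :
  defect (pblocks p vsep5 ++ p ++ [:: 1; 1]) = (defect (pblocks p vsep5 ++ p)).+2.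
Proof.
have old j u : 0 < j <= 2 -> suffix u (pblocks p vsep5 ++ p ++ nseq j 1) -> pal u ->
    infix u (pblocks p vsep5 ++ p).
  move=> j12 Su Pu.
  case: (leqP (size u) (size (nseq j 1 ++ p ++ nseq j 1))) => [short|long].
    exact: pal_suffix_ones_short j12 short Su Pu.
  by case: (pal_suffix_ones_long j12 long Su Pu).
have E1 : rcons (pblocks p vsep5 ++ p ++ [:: 1]) 1 = pblocks p vsep5 ++ p ++ [:: 1; 1].
  by rewrite -cats1 -!catA.
have E0 : rcons (pblocks p vsep5 ++ p) 1 = pblocks p vsep5 ++ p ++ [:: 1].
  by rewrite -cats1 -catA.
rewrite -E1 defect_rcons_old => [|u]; last first.
  by rewrite E1 => Su Pu; rewrite catA; apply/infix_catr/(old 2).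
by rewrite -E0 defect_rcons_old // => u; rewrite E0; apply: (old 1).
Qed.

End OnesAfterBlocks.

(* [qk k = phi(w) 010] for the prefix [w] of length [6 * 11 ^ k - 1] of [v]. *)
Definition qk k : word := pblocks (pk k) vsep5 ++ pk k.

Lemma phiw_toep_qk k : phiw (mkseq toep (6 * 11 ^ k)) = qk k ++ [:: 1; 1; 1].
Proof.
have K0 := expn11_gt0 k.
rewrite -(subnK (_ : 1 <= 6 * 11 ^ k)) ?addn1 ?mkseqS; last by lia.
rewrite -cats1 morph_word_cat (_ : toep _ = 2).
  by rewrite (_ : phiw [:: 2] = w010 ++ [:: 1; 1; 1]) // catA phiw_toep_010.
by rewrite (toep_hole_end k (_ : 0 < 6)) // toep_small.
Qed.

Lemma pal_pk k : pal (pk k).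
Proof. by rewrite /pal /pk rev_phiw_010 (eqP (pal_vk k)). Qed.

Lemma pk_head k : pk k = 0 :: behead (pk k).
Proof. by rewrite /pk; case: (vk k) => [|a w] //; rewrite phiw_cons phiE. Qed.

Lemma defect_qk_11 k : defect (qk k ++ [:: 1; 1]) = (defect (qk k)).+2.
Proof.
by rewrite -catA defect_pblocks_11 //; [apply: pal_pk | apply: pk_head | apply: pk_occ].
Qed.

Lemma iprefix_phi_vlim_qk k j : j <= 3 ->
  iprefix (morph_iword phi vlim) (size (qk k) + j) = qk k ++ take j [:: 1; 1; 1].
Proof.
move=> j3; rewrite (iprefix_phi_vlim (m := 6 * 11 ^ k)) phiw_toep_qk.
  by rewrite take_cat ltnNge leq_addr /= addKn.
by rewrite size_cat /=; lia.
Qed.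

Lemma size_qk_lt k : size (qk k) + 2 <= size (qk k.+1).
Proof.
have := size_phiw_toep (6 * 11 ^ k) (6 * 11 ^ k.+1 - 6 * 11 ^ k).
rewrite subnKC; last by rewrite leq_pmul2l // leq_pexp2l.
rewrite !phiw_toep_qk !size_cat expnS; have := expn11_gt0 k; lia.
Qed.

Lemma defect_phi_vlim_ge k :
  2 * k.+1 <= defect (iprefix (morph_iword phi vlim) (size (qk k) + 2)).
Proof.
have jump k' : defect (iprefix (morph_iword phi vlim) (size (qk k') + 2)) =
    (defect (iprefix (morph_iword phi vlim) (size (qk k')))).+2.
  rewrite (iprefix_phi_vlim_qk k' (_ : 2 <= 3)) //= -[size (qk k')]addn0.
  by rewrite iprefix_phi_vlim_qk // cats0 defect_qk_11.
elim: k => [|k IH]; rewrite jump //.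
have := defect_iprefix_mono (morph_iword phi vlim) (size_qk_lt k); lia.
Qed.

Theorem proposition5p8 :
  (forall i, prefix (vfin i) (vfin i.+1)) /\
  (forall i n, n < size (vfin i) -> vlim n = nth 0 (vfin i) n) /\
  rich vlim /\
  infinite_defect (morph_iword phi vlim).
Proof.
split; first by move=> i; rewrite /= /pclos -catA prefix_prefix.
split.
  by move=> i n; rewrite vlim_toep vfin_vk size_mkseq => ni; rewrite nth_mkseq.
split; first exact: rich_vlim.
by move=> m; exists (size (qk m) + 2); apply: leq_trans (defect_phi_vlim_ge m); lia.
Qed.
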